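(* Let $U_{d,n}$ be a simple uniform matroid. The following are equivalent: (1) $U_{d,n}$ is regular; (2) $U_{d,n}$ is binary; (3) $U_{d,n}$ has a unique minimal tropical basis.
   Context: For natural numbers $n\ge d$, the uniform matroid $U_{d,n}$ has ground set $[n]=\{1,\dots,n\}$, and its circuits are all $(d+1)$-element subsets of $[n]$. A matroid is simple if every circuit has cardinality greater than $2$. It is binary if it is representable over $\mathbb F_2$, and regular if it is representable over every field. For a matroid $M=([n],\mathscr C)$, let ${\bf TP}^{n-1}$ be the tropical projective space over $(\mathbb R\cup\{-\infty\},\max,+)$. For a circuit $C$, $V(C)$ is the set of $x\in{\bf TP}^{n-1}$ such that $\max\{x_i:i\in C\}$ is attained at least twice. For $B\subseteq\mathscr C$, set $V(B)=\bigcap_{C\in B}V(C)$. A subset $B\subseteq \mathscr C$ is a tropical basis if $V(B)=V(\mathscr C)$. It is a minimal tropical basis if no proper subset of it is a tropical basis. *)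

From Stdlib Require Import Reals.
From HB Require Import structures.
From mathcomp Require Import all_boot all_order all_algebra.
Set Implicit Arguments. Unset Strict Implicit. Unset Printing Implicit Defensive.
Import GRing.Theory.

(* A matroid on the ground set [n] = 'I_n is given by its set of circuits. *)

Definition uniform_circuits (d n : nat) : {set {set 'I_n}} :=
  [set S : {set 'I_n} | #|S| == d.+1].

Definition simple_matroid n (Cs : {set {set 'I_n}}) : Prop :=
  forall C, C \in Cs -> 2 < #|C|.

Definition cols_indep (F : fieldType) r n (A : 'M[F]_(r, n)) (S : {set 'I_n}) : Prop :=
  forall a : 'I_n -> F,
    (\sum_(i in S) a i *: col i A)%R = 0%R -> forall i, i \in S -> a i = 0%R.

Definition representable (F : fieldType) n (Cs : {set {set 'I_n}}) : Prop :=
  exists (r : nat) (A : 'M[F]_(r, n)), forall S : {set 'I_n},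
    cols_indep A S <-> ~ (exists2 C, C \in Cs & C \subset S).

Definition binary n (Cs : {set {set 'I_n}}) : Prop := representable ('F_2 : fieldType) Cs.

Definition regular n (Cs : {set {set 'I_n}}) : Prop :=
  forall F : fieldType, representable F Cs.

(* Tropical numbers R ∪ {-oo}: None stands for -oo. *)
Definition trop := option R.
Definition trop_le (a b : trop) : Prop :=
  match a, b with
  | None, _ => True
  | Some _, None => False
  | Some x, Some y => Rle x y
  end.

(* Representatives of points of TP^{n-1}: vectors not identically -oo.
   All sets V(.) below are invariant under adding a real constant, so we
   work with representatives. *)
Definition tpoint n (x : 'I_n -> trop) : Prop := exists i, x i <> None.

Definition in_V n (C : {set 'I_n}) (x : 'I_n -> trop) : Prop :=
  exists i j, [/\ i \in C, j \in C, i != j, x i = x j &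
                  forall k, k \in C -> trop_le (x k) (x i)].

Definition V_of n (B : {set {set 'I_n}}) (x : 'I_n -> trop) : Prop :=
  tpoint x /\ forall C, C \in B -> in_V C x.

Definition tropical_basis n (Cs B : {set {set 'I_n}}) : Prop :=
  B \subset Cs /\ forall x, V_of B x <-> V_of Cs x.

Definition minimal_tropical_basis n (Cs B : {set {set 'I_n}}) : Prop :=
  tropical_basis Cs B /\ forall B' : {set {set 'I_n}}, B' \proper B -> ~ tropical_basis Cs B'.

From Stdlib Require Import Reals Classical.
From mathcomp Require Import all_boot all_order all_algebra zify.
Set Implicit Arguments. Unset Strict Implicit. Unset Printing Implicit Defensive.
Import GRing.Theory.

(* For n <= d + 1 there is at most one circuit: U_{d,n} is represented over every
   field by the identity matrix or by [I | 1], and no proper subset of the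
   circuits is a tropical basis.  For n >= d + 2 simplicity forces d >= 2.
   Over F_2 the columns of every circuit then sum to 0, so the circuits T + b and
   T + b' through a common d-set T force col b = col b', although {b, b'} is
   independent.  Tropically every circuit C0 is redundant: if the maximum of x
   on C0 were attained only at i, then exchanging i, or some other j in C0, for
   a k outside C0 gives a circuit on which the maximum of x is attained only
   once.  A unique minimal tropical basis would thus avoid every circuit and be
   empty, but the empty set is not a tropical basis. *)

Lemma exists_notin n (S : {set 'I_n}) : #|S| < n -> exists x, x \notin S.
Proof.
move=> ltSn; have := cardsC S; rewrite card_ord => cardSC.
have /card_gt0P [x] : 0 < #|~: S| by lia.
by rewrite inE; exists x.
Qed.

Lemma exists_set_card n k : k <= n -> exists S : {set 'I_n}, #|S| = k.
Proof.
elim: k => [|k IHk] lekn; first by exists set0; rewrite cards0.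
have [S cardS] := IHk (ltnW lekn).
have [x xS] : exists x, x \notin S by apply: exists_notin; rewrite cardS.
by exists (x |: S); rewrite cardsU1 xS cardS.
Qed.

Lemma cards_exchange (T : finType) (C : {set T}) z k :
  z \in C -> k \notin C -> #|k |: (C :\ z)| = #|C|.
Proof.
move=> zC kC; rewrite cardsU1 in_setD1 (negbTE kC) andbF (cardsD1 z C) zC.
by rewrite add1n.
Qed.

Lemma trop_le_refl a : trop_le a a.
Proof. by case: a => [x|] //=; apply: Rle_refl. Qed.

Lemma trop_le_trans a b c : trop_le a b -> trop_le b c -> trop_le a c.
Proof. by case: a => [x|]; case: b => [y|]; case: c => [z|] //=; apply: Rle_trans. Qed.

Lemma trop_le_total a b : trop_le a b \/ trop_le b a.
Proof.
case: a => [x|]; case: b => [y|] /=; auto.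
by case: (Rle_lt_dec x y) => [|/Rlt_le]; auto.
Qed.

Lemma trop_le_antisym a b : trop_le a b -> trop_le b a -> a = b.
Proof.
by case: a => [x|]; case: b => [y|] //= xy yx; rewrite (Rle_antisym _ _ xy yx).
Qed.

Lemma trop_argmax_seq (T : eqType) (x : T -> trop) (s : seq T) :
  s != [::] -> exists2 i, i \in s & forall k, k \in s -> trop_le (x k) (x i).
Proof.
elim: s => // a [|b s] IHs _.
  exists a; rewrite ?mem_seq1 // => k; rewrite mem_seq1 => /eqP ->.
  exact: trop_le_refl.
have [i is_i imax] := IHs isT.
have [ai|ia] := trop_le_total (x a) (x i).
- exists i; first by rewrite inE is_i orbT.
  by move=> k; rewrite inE => /orP [/eqP ->|/imax].
- exists a; first by rewrite inE eqxx.
  move=> k; rewrite inE => /orP [/eqP ->|/imax ki]; first exact: trop_le_refl.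
  exact: trop_le_trans ki ia.
Qed.

Lemma trop_argmax n (x : 'I_n -> trop) (C : {set 'I_n}) :
  C != set0 -> exists2 i, i \in C & forall k, k \in C -> trop_le (x k) (x i).
Proof.
case/set0Pn => c cC; have [|i] := @trop_argmax_seq _ x (enum C).
  by apply/eqP => enumC; have := mem_enum C c; rewrite enumC cC.
by rewrite mem_enum => iC imax; exists i => // k kC; apply: imax; rewrite mem_enum.
Qed.

Lemma in_V_rival n (C : {set 'I_n}) x i : i \in C -> in_V C x ->
  exists2 y, (y \in C) && (y != i) & trop_le (x i) (x y).
Proof.
move=> iC [a [b [aC bC ab xab amax]]].
have [ai | ai] := eqVneq a i; last by exists a; rewrite ?aC ?ai //; apply: amax.
by exists b; rewrite ?bC -?ai 1?eq_sym // -xab; apply: amax.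
Qed.

Lemma in_V_tie n (C : {set 'I_n}) x i y :
  i \in C -> (forall k, k \in C -> trop_le (x k) (x i)) ->
  y \in C -> y != i -> trop_le (x i) (x y) -> in_V C x.
Proof.
move=> iC imax yC yi iy; exists i, y; split; rewrite 1?eq_sym //.
exact: trop_le_antisym iy (imax y yC).
Qed.

Section TropicalBases.

Variables (n : nat) (Cs : {set {set 'I_n}}).

Lemma tropical_basis_refl : tropical_basis Cs Cs.
Proof. by split=> //; apply: subxx. Qed.

Lemma set0_not_tropical_basis C : C \in Cs -> C != set0 -> ~ tropical_basis Cs set0.
Proof.
move=> CCs /set0Pn [c cC] [_ V0].
pose x i : trop := if i == c then Some R0 else None.
have [_ /(_ C CCs) [i [j [iC jC ij xij imax]]]] : V_of Cs x.
  by apply/V0; split=> [|C']; [exists c; rewrite /x eqxx | rewrite inE].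
have ic : i = c by apply/eqP; move: (imax c cC); rewrite /x eqxx; case: (i == c).
move: xij ij; rewrite ic /x eqxx.
by case: eqVneq => // ->; rewrite eqxx.
Qed.

Lemma exists_minimal_tropical_basis B : tropical_basis Cs B ->
  exists2 B' : {set {set 'I_n}}, B' \subset B & minimal_tropical_basis Cs B'.
Proof.
have [m] := ubnP #|B|; elim: m B => // m IHm B ltBm basisB.
case: (classic (forall B' : {set {set 'I_n}}, B' \proper B -> ~ tropical_basis Cs B'))
  => [minB | ]; first by exists B => //; split.
move=> /not_all_ex_not [B' notmin].
have [B'B /NNPP basisB'] := imply_to_and _ _ notmin.
have [|B'' B''B' minB''] := IHm B' _ basisB'; first by move: (proper_card B'B); lia.
by exists B'' => //; apply: subset_trans B''B' (proper_sub B'B).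
Qed.

Lemma minimal_tropical_basis_unique :
  minimal_tropical_basis Cs Cs -> exists! B, minimal_tropical_basis Cs B.
Proof.
move=> minCs; exists Cs; split=> // B [[BCs basisB] _].
apply/eqP; rewrite eq_sym eqEproper BCs /=; apply/negP => BCs'.
exact: minCs.2 B BCs' (conj BCs basisB).
Qed.

Lemma no_unique_minimal_tropical_basis C :
  C \in Cs -> C != set0 -> (forall C', C' \in Cs -> tropical_basis Cs (Cs :\ C')) ->
  ~ exists! B, minimal_tropical_basis Cs B.
Proof.
move=> CCs C0 basis_del [B [minB uniqB]].
suff B0 : B = set0 by apply: set0_not_tropical_basis CCs C0 _; rewrite -B0; case: minB.
apply/setP => C'; rewrite inE; apply/negP => C'B.
have C'Cs : C' \in Cs by move: minB => [[/subsetP BCs _] _]; apply: BCs.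
have [B' B'del /uniqB eqB'] := exists_minimal_tropical_basis (basis_del C' C'Cs).
by move/subsetP/(_ C'): B'del; rewrite -eqB' C'B in_setD1 eqxx => /(_ isT).
Qed.

End TropicalBases.

Lemma uniform_in_V_exchange d n (C0 : {set 'I_n}) x :
  0 < d -> d.+2 <= n -> #|C0| = d.+1 ->
  (forall C, C \in uniform_circuits d n :\ C0 -> in_V C x) -> in_V C0 x.
Proof.
move=> d_gt0 le_dn cardC0 Vx.
have [|i iC0 imax] := @trop_argmax n x C0; first by rewrite -card_gt0 cardC0.
have [|k kC0] := @exists_notin n C0; first by rewrite cardC0.
have Vexch z : z \in C0 -> in_V (k |: (C0 :\ z)) x.
  move=> zC0; apply: Vx; rewrite !inE cards_exchange // cardC0 eqxx andbT.
  by apply: contraNneq kC0 => <-; rewrite setU11.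
have [j] : exists j, j \in C0 :\ i.
  by apply/card_gt0P; move: (cardsD1 i C0); rewrite iC0 cardC0; lia.
rewrite in_setD1 => /andP [ji jC0].
have Vx_if_ik : trop_le (x i) (x k) -> in_V C0 x.
  move=> ik; have [y /andP [yS yk] ky] := in_V_rival (setU11 k _) (Vexch i iC0).
  move: yS; rewrite in_setU1 (negbTE yk) in_setD1 => /andP [yi yC0].
  exact: in_V_tie iC0 imax yC0 yi (trop_le_trans ik ky).
have iCj : i \in k |: (C0 :\ j) by rewrite in_setU1 in_setD1 iC0 (eq_sym i j) ji orbT.
have [y /andP [yS yi] iy] := in_V_rival iCj (Vexch j jC0).
move: yS; rewrite in_setU1 in_setD1 => /orP [/eqP yk | /andP [_ yC0]].
  by apply: Vx_if_ik; rewrite -yk.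
exact: in_V_tie iC0 imax yC0 yi iy.
Qed.

Lemma uniform_tropical_basis_setD1 d n C0 : 0 < d -> d.+2 <= n ->
  C0 \in uniform_circuits d n ->
  tropical_basis (uniform_circuits d n) (uniform_circuits d n :\ C0).
Proof.
move=> d_gt0 le_dn /[dup] C0Cs /[1!inE] /eqP cardC0.
split=> [|x]; first exact: subsetDl.
split; case=> tx Vx; split=> // C; last by rewrite in_setD1 => /andP [_ /Vx].
have [-> | CC0 CCs] := eqVneq C C0; last by apply: Vx; rewrite in_setD1 CC0.
by move=> _; apply: uniform_in_V_exchange d_gt0 le_dn cardC0 Vx.
Qed.

Lemma uniform_no_unique_minimal_tropical_basis d n : 0 < d -> d.+2 <= n ->
  ~ exists! B, minimal_tropical_basis (uniform_circuits d n) B.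
Proof.
move=> d_gt0 le_dn; have [C cardC] := @exists_set_card n d.+1 (ltnW le_dn).
apply: (@no_unique_minimal_tropical_basis _ _ C); first by rewrite inE cardC.
  by rewrite -card_gt0 cardC.
by move=> C' /uniform_tropical_basis_setD1; apply.
Qed.

Lemma uniform_circuit_card d n (C S : {set 'I_n}) :
  C \in uniform_circuits d n -> C \subset S -> d < #|S|.
Proof. by rewrite inE => /eqP cardC /subset_leq_card; rewrite cardC. Qed.

Lemma uniform_circuits_full n : uniform_circuits n n = set0.
Proof.
apply/setP => C; rewrite !inE; apply/negbTE/eqP => cardC.
by have := max_card C; rewrite card_ord cardC ltnn.
Qed.

Lemma uniform_circuits_corank1 d : uniform_circuits d d.+1 = [set setT].
Proof.
apply/setP => C; rewrite !inE eqEcard subsetT cardsT card_ord eqn_leq.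
by have := max_card C; rewrite card_ord => ->.
Qed.

Lemma uniform_full_minimal_tropical_basis n :
  minimal_tropical_basis (uniform_circuits n n) (uniform_circuits n n).
Proof.
split; first exact: tropical_basis_refl.
by move=> B /proper_card; rewrite uniform_circuits_full cards0.
Qed.

Lemma uniform_corank1_minimal_tropical_basis d :
  minimal_tropical_basis (uniform_circuits d d.+1) (uniform_circuits d d.+1).
Proof.
split=> [|B]; first exact: tropical_basis_refl.
rewrite {1}uniform_circuits_corank1 => /proper_card; rewrite cards1 ltnS leqn0.
move=> /eqP/cards0_eq ->; apply: (@set0_not_tropical_basis _ _ setT).
  by rewrite uniform_circuits_corank1 set11.
by apply/set0Pn; exists ord0.
Qed.

Lemma regular_binary n (Cs : {set {set 'I_n}}) : regular Cs -> binary Cs.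
Proof. by move=> regCs; apply: regCs. Qed.

Section Representations.

Local Open Scope ring_scope.

Lemma col_combination_entry (F : fieldType) r n (A : 'M[F]_(r, n))
    (S : {set 'I_n}) a j k :
  (\sum_(i in S) a i *: col i A) j k = \sum_(i in S) a i * A j i.
Proof. by rewrite summxE; apply: eq_bigr => i _; rewrite !mxE. Qed.

Lemma sum_mul_delta (R : pzSemiRingType) (T : finType) (S : {set T}) (a : T -> R) i :
  \sum_(k in S) a k * (i == k)%:R = if i \in S then a i else 0.
Proof.
rewrite big_mkcond (bigD1 i) //= eqxx mulr1 big1 ?addr0 // => k ki.
by rewrite eq_sym (negbTE ki) mulr0; case: ifP.
Qed.

Lemma regular_uniform_full n : regular (uniform_circuits n n).
Proof.
move=> F; exists n, 1%:M => S; rewrite uniform_circuits_full.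
split=> [_ [C] | _ a sum0 i iS]; first by rewrite inE.
have := congr1 (fun M : 'M[F]_(n, 1) => M i ord0) sum0.
rewrite col_combination_entry mxE.
by under eq_bigr do rewrite mxE; rewrite sum_mul_delta iS.
Qed.

Lemma regular_uniform_corank1 d : regular (uniform_circuits d d.+1).
Proof.
move=> F.
(* The columns are the unit vectors of F^d followed by the all-ones vector. *)
pose A : 'M[F]_(d, d.+1) :=
  \matrix_(j, i) ((lift ord_max j == i)%:R + (ord_max == i)%:R).
pose last_term (S : {set 'I_d.+1}) (a : 'I_d.+1 -> F) :=
  if ord_max \in S then a ord_max else 0.
have entry (S : {set 'I_d.+1}) a j : (\sum_(i in S) a i *: col i A) j 0 =
    (if lift ord_max j \in S then a (lift ord_max j) else 0) + last_term S a.
  rewrite col_combination_entry; under eq_bigr do rewrite mxE mulrDr.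
  by rewrite big_split /= !sum_mul_delta.
exists d, A => S; rewrite uniform_circuits_corank1; split.
- move=> indepS [_ /set1P -> /[!subTset] /eqP eqS].
  pose a (i : 'I_d.+1) : F := if i == ord_max then -1 else 1.
  have /indepS /(_ ord_max) : \sum_(i in S) a i *: col i A = 0.
    apply/matrixP => j k; rewrite ord1 entry /last_term eqS !inE mxE /a.
    by rewrite eq_sym eq_liftF eqxx addrN.
  by rewrite eqS inE /a eqxx => /(_ isT) /eqP; rewrite oppr_eq0 oner_eq0.
- move=> no_circuit a sum0.
  have /subsetPn [m _ mS] : ~~ (setT \subset S).
    by apply/negP => TS; apply: no_circuit; exists setT; rewrite ?set11.
  have row j : (if lift ord_max j \in S then a (lift ord_max j) else 0)
      + last_term S a = 0 by rewrite -entry sum0 mxE.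
  have last0 : last_term S a = 0.
    case: (unliftP ord_max m) mS => [j -> | ->] mS.
      by have := row j; rewrite (negbTE mS) add0r.
    by rewrite /last_term (negbTE mS).
  move=> i iS; case: (unliftP ord_max i) iS => [j -> | ->] iS.
    by have := row j; rewrite last0 addr0 iS.
  by move: last0; rewrite /last_term iS.
Qed.

Section UniformRepresentation.

Variables (F : fieldType) (d n r : nat) (A : 'M[F]_(r, n)).
Hypothesis repA : forall S : {set 'I_n},
  cols_indep A S <-> ~ (exists2 C, C \in uniform_circuits d n & C \subset S).

Lemma uniform_small_cols_indep (S : {set 'I_n}) : (#|S| <= d)%N -> cols_indep A S.
Proof. by move=> leSd; apply/repA => -[C /uniform_circuit_card /[apply]]; lia. Qed.

Lemma uniform_circuit_dependency (C : {set 'I_n}) : #|C| = d.+1 ->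
  exists2 a, \sum_(i in C) a i *: col i A = 0 & forall i, i \in C -> a i != 0.
Proof.
move=> cardC.
have /not_all_ex_not [a nontrivial] : ~ cols_indep A C.
  by move/repA; apply; exists C; rewrite ?inE ?cardC.
have [sum0 /not_all_ex_not [i0 nz0]] := imply_to_and _ _ nontrivial.
have [i0C a0] := imply_to_and _ _ nz0.
exists a => // j jC; apply/eqP => aj0.
have i0j : i0 != j by apply/eqP => i0j; rewrite i0j in a0.
have indepCj : cols_indep A (C :\ j).
  by apply: uniform_small_cols_indep; move: (cardsD1 j C); rewrite jC cardC; lia.
apply: a0; apply: indepCj; last by rewrite in_setD1 i0j.
rewrite -[RHS]sum0 (bigD1 j jC) /= aj0 scale0r add0r.
by apply: eq_bigl => k; rewrite in_setD1 andbC.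
Qed.

End UniformRepresentation.

Lemma F2_neq0 (x : 'F_2) : x != 0 -> x = 1.
Proof. by case: x => [[|[|m]] ltm] //= _; apply: val_inj. Qed.

Lemma uniform_not_binary d n :
  (1 < d)%N -> (d.+2 <= n)%N -> ~ binary (uniform_circuits d n).
Proof.
move=> lt1d le_dn [r [A repA]].
have circuit_sum (C : {set 'I_n}) : #|C| = d.+1 -> \sum_(i in C) col i A = 0.
  move=> cardC; have [a sum0 aC] := uniform_circuit_dependency repA cardC.
  rewrite -[RHS]sum0.
  by apply: eq_bigr => i iC; rewrite (F2_neq0 (aC i iC)) scale1r.
have [T cardT] := @exists_set_card n d (ltnW (ltnW le_dn)).
have [|b bT] := @exists_notin n T; first by rewrite cardT; lia.
have [|b' bb'T] := @exists_notin n (b |: T); first by rewrite cardsU1 bT cardT; lia.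
move: bb'T; rewrite in_setU1 negb_or => /andP [b'b b'T].
have colb : col b A = col b' A.
  have := circuit_sum (b |: T); have := circuit_sum (b' |: T).
  rewrite !big_setU1 //= !cardsU1 bT b'T cardT => /(_ erefl) sumb' /(_ erefl) sumb.
  by apply: (addIr (\sum_(i in T) col i A)); rewrite sumb sumb'.
have indep_bb' : cols_indep A [set b; b'].
  by apply: (uniform_small_cols_indep repA); rewrite cards2; lia.
pose a (z : 'I_n) : 'F_2 := if z == b then 1 else -1.
have /indep_bb' /(_ b (setU11 _ _)) : \sum_(i in [set b; b']) a i *: col i A = 0.
  rewrite big_setU1 ?in_set1 1?eq_sym //= big_set1 /a eqxx (negbTE b'b) colb.
  by rewrite scale1r scaleN1r subrr.
by rewrite /a eqxx => /eqP; rewrite oner_eq0.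
Qed.

End Representations.

Theorem proposition3 (d n : nat) (hdn : d <= n)
  (hsimple : simple_matroid (uniform_circuits d n)) :
  (regular (uniform_circuits d n) <-> binary (uniform_circuits d n)) /\
  (binary (uniform_circuits d n) <->
     exists! B, minimal_tropical_basis (uniform_circuits d n) B).
Proof.
have [lt_d1n | le_nd1] := ltnP d.+1 n.
  have lt1d : 1 < d.
    have [C cardC] := @exists_set_card n d.+1 (ltnW lt_d1n).
    by have := hsimple C; rewrite inE cardC eqxx => /(_ isT).
  have not_binary := uniform_not_binary lt1d lt_d1n.
  have not_unique := uniform_no_unique_minimal_tropical_basis (ltnW lt1d) lt_d1n.
  split; split=> H; exfalso;
    [exact: not_binary (regular_binary H) | exact: not_binary H ..| exact: not_unique H].
have [reg uniq] : regular (uniform_circuits d n) /\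
    exists! B, minimal_tropical_basis (uniform_circuits d n) B.
  have [-> | ->] : n = d \/ n = d.+1 by lia.
    split; first exact: regular_uniform_full.
    exact/minimal_tropical_basis_unique/uniform_full_minimal_tropical_basis.
  split; first exact: regular_uniform_corank1.
  exact/minimal_tropical_basis_unique/uniform_corank1_minimal_tropical_basis.
by split; split=> // _; apply: regular_binary.
Qed.
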